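(* Let $\lambda>0$, $\eta>0$ and $t>0$ be given. Then $$\big\||t\xi^2|^{\lambda}e^{\eta(|\xi|-\xi^2)t}\big\|_{L^\infty_\xi(\mathbb{R})}\le C_\lambda f_\lambda(t),\qquad f_\lambda(t)=\big(t^\lambda+\eta^{-\lambda}\big)\,e^{\frac{\eta}{8}\left(t+t^{1/2}\sqrt{t+\frac{16\lambda}{\eta}}\right)},$$ where $C_\lambda>0$ depends only on $\lambda$, and $f_\lambda$ is a nondecreasing function on $(0,\infty)$. *)

From HB Require Import structures.
From mathcomp Require Import all_boot all_order all_algebra.
From mathcomp Require Import all_classical all_reals all_analysis.
Set Implicit Arguments. Unset Strict Implicit. Unset Printing Implicit Defensive.
Import Order.TTheory GRing.Theory Num.Theory.
Local Open Scope ring_scope.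

Definition f_lam (R : realType) (lam eta t : R) : R :=
  (t `^ lam + eta `^ (- lam)) *
  expR (eta / 8 * (t + Num.sqrt t * Num.sqrt (t + 16 * lam / eta))).

Definition g_fun (R : realType) (lam eta t xi : R) : R :=
  `| t * xi ^+ 2 | `^ lam * expR (eta * (`|xi| - xi ^+ 2) * t).

From HB Require Import structures.
From mathcomp Require Import all_boot all_order all_algebra.
From mathcomp Require Import all_classical all_reals all_analysis.
From mathcomp Require Import ring lra.
Set Implicit Arguments. Unset Strict Implicit. Unset Printing Implicit Defensive.
Import Order.TTheory GRing.Theory Num.Theory.
Local Open Scope ring_scope.

(* Write a = |xi| and u = t a^2.  For a <= 2 we have u <= 4t and a - a^2 <= 1/4, so
   g <= 4^lam t^lam e^(eta t/4), and the exponent of f_lam is at least eta t/4.  For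
   a >= 2 we have a - a^2 <= -a^2/2, so g <= u^lam e^(-eta u/2), whose supremum over
   u >= 0 is at most (2 lam/eta)^lam, the second summand of f_lam. *)

Section PowerVersusExponential.
Variable R : realType.
Implicit Types lam eta u v t c : R.

Lemma powR_le_expR lam v : 0 < lam -> 0 <= v -> v `^ lam <= lam `^ lam * expR v.
Proof.
move=> lam_gt0 v_ge0.
have vl_ge0 : 0 <= v / lam by rewrite divr_ge0 // ltW.
have vl_le_exp : v / lam <= expR (v / lam).
  by apply: le_trans (expR_ge1Dx _); rewrite lerDr.
have -> : v `^ lam = lam `^ lam * (v / lam) `^ lam.
  by rewrite -powRM ?(ltW lam_gt0) // [lam * _]mulrC divfK ?gt_eqF.
rewrite ler_pM2l ?powR_gt0 //.
have -> : expR v = expR (v / lam) `^ lam by rewrite -expRM divfK ?gt_eqF.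
by apply: ge0_ler_powR; rewrite ?nnegrE ?expR_ge0 ?(ltW lam_gt0).
Qed.

Lemma powR_mul_expRN_le lam eta u : 0 < lam -> 0 < eta -> 0 <= u ->
  u `^ lam * expR (- (eta * u / 2)) <= (2 * lam) `^ lam * eta `^ (- lam).
Proof.
move=> lam_gt0 eta_gt0 u_ge0.
rewrite powRN -(ler_pM2l (powR_gt0 lam eta_gt0)) mulrA mulrCA divff ?gt_eqF ?powR_gt0 //.
rewrite mulr1 -powRM ?(ltW eta_gt0) // expRN ler_pdivrMr ?expR_gt0 //.
set v := eta * u / 2.
have v_ge0 : 0 <= v by rewrite divr_ge0 // mulr_ge0 // ltW.
have -> : eta * u = 2 * v by rewrite /v; field.
rewrite (@powRM _ 2 v) // (@powRM _ 2 lam) ?(ltW lam_gt0) // -mulrA.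
rewrite ler_pM2l ?powR_gt0 //.
exact: powR_le_expR.
Qed.

Lemma ler_sqrt_mulD t c : 0 <= t -> 0 <= c -> t <= Num.sqrt t * Num.sqrt (t + c).
Proof.
move=> t_ge0 c_ge0.
have sqrt_le : Num.sqrt t <= Num.sqrt (t + c) by rewrite ler_sqrt; lra.
rewrite -{1}(sqr_sqrtr t_ge0) expr2.
by apply: ler_wpM2l; rewrite ?sqrtr_ge0.
Qed.

End PowerVersusExponential.

Section SupremumBound.
Variables (R : realType) (lam eta t : R).
Hypotheses (lam_gt0 : 0 < lam) (eta_gt0 : 0 < eta) (t_gt0 : 0 < t).

Lemma g_funE xi :
  g_fun lam eta t xi = (t * `|xi| ^+ 2) `^ lam * expR (eta * (`|xi| - `|xi| ^+ 2) * t).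
Proof.
rewrite /g_fun real_normK ?num_real // ger0_norm //.
by rewrite mulr_ge0 ?sqr_ge0 ?ltW.
Qed.

Lemma f_lam_exponent_ge :
  eta * t / 4 <= eta / 8 * (t + Num.sqrt t * Num.sqrt (t + 16 * lam / eta)).
Proof.
set S := Num.sqrt t * _.
have t_le_S : t <= S by apply: ler_sqrt_mulD; rewrite ?divr_ge0 ?mulr_ge0 // ltW.
have : 0 <= eta * (S - t) by rewrite mulr_ge0 ?subr_ge0 // ltW.
lra.
Qed.

Lemma f_lam_ge_powR : t `^ lam * expR (eta * t / 4) <= f_lam lam eta t.
Proof.
rewrite /f_lam; apply: ler_pM; rewrite ?powR_ge0 ?expR_ge0 //.
- by rewrite lerDl powR_ge0.
- by rewrite ler_expR f_lam_exponent_ge.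
Qed.

Lemma f_lam_ge_powRN : eta `^ (- lam) <= f_lam lam eta t.
Proof.
have exp_ge1 : 1 <= expR (eta / 8 * (t + Num.sqrt t * Num.sqrt (t + 16 * lam / eta))).
  rewrite -[X in X <= _]expR0 ler_expR; apply: le_trans _ f_lam_exponent_ge.
  by rewrite divr_ge0 // mulr_ge0 // ltW.
rewrite /f_lam -[X in X <= _]mulr1; apply: ler_pM; rewrite ?powR_ge0 //.
by rewrite lerDr powR_ge0.
Qed.

Lemma g_fun_le_small xi : `|xi| <= 2 ->
  g_fun lam eta t xi <= 4 `^ lam * (t `^ lam * expR (eta * t / 4)).
Proof.
move=> a_le2; rewrite g_funE mulrA -powRM ?(ltW t_gt0) //.
have a_ge0 : 0 <= `|xi| := normr_ge0 xi.
apply: ler_pM; rewrite ?powR_ge0 ?expR_ge0 //.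
- apply: ge0_ler_powR; rewrite ?nnegrE ?(ltW lam_gt0) ?mulr_ge0 ?sqr_ge0 ?(ltW t_gt0) //.
  by rewrite mulrC ler_pM2r //; nra.
- have a_sub_sqr : `|xi| - `|xi| ^+ 2 <= 4^-1.
    by have := sqr_ge0 (`|xi| - 2^-1); nra.
  have eta_t_gt0 : 0 < eta * t by rewrite mulr_gt0.
  rewrite ler_expR; nra.
Qed.

Lemma g_fun_le_large xi : 2 <= `|xi| ->
  g_fun lam eta t xi <= (2 * lam) `^ lam * eta `^ (- lam).
Proof.
move=> a_ge2; rewrite g_funE.
have u_ge0 : 0 <= t * `|xi| ^+ 2 by rewrite mulr_ge0 ?sqr_ge0 // ltW.
apply: le_trans (powR_mul_expRN_le lam_gt0 eta_gt0 u_ge0).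
apply: ler_wpM2l; rewrite ?powR_ge0 // ler_expR.
have a_sub_sqr : `|xi| - `|xi| ^+ 2 <= - (`|xi| ^+ 2 / 2) by nra.
have eta_t_gt0 : 0 < eta * t by rewrite mulr_gt0.
nra.
Qed.

Lemma g_fun_le_f_lam xi :
  g_fun lam eta t xi <= (4 `^ lam + (2 * lam) `^ lam) * f_lam lam eta t.
Proof.
have f_ge0 : 0 <= f_lam lam eta t := le_trans (powR_ge0 _ _) f_lam_ge_powRN.
rewrite mulrDl; have [a_le2|a_gt2] := leP `|xi| 2.
- apply: le_trans (g_fun_le_small a_le2) _.
  apply: ler_wpDr; first by rewrite mulr_ge0 ?powR_ge0.
  by apply: ler_wpM2l; [exact: powR_ge0 | exact: f_lam_ge_powR].
- apply: le_trans (g_fun_le_large (ltW a_gt2)) _.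
  apply: ler_wpDl; first by rewrite mulr_ge0 ?powR_ge0.
  by apply: ler_wpM2l; [exact: powR_ge0 | exact: f_lam_ge_powRN].
Qed.

End SupremumBound.

Lemma f_lam_nondecreasing (R : realType) (lam eta s t : R) :
  0 <= lam -> 0 <= eta -> 0 <= s -> s <= t -> f_lam lam eta s <= f_lam lam eta t.
Proof.
move=> lam_ge0 eta_ge0 s_ge0 s_le_t.
have t_ge0 : 0 <= t := le_trans s_ge0 s_le_t.
have c_ge0 : 0 <= 16 * lam / eta by rewrite divr_ge0 ?mulr_ge0.
rewrite /f_lam; apply: ler_pM; rewrite ?addr_ge0 ?powR_ge0 ?expR_ge0 //.
- by rewrite lerD2r; apply: ge0_ler_powR.
- rewrite ler_expR ler_wpM2l ?divr_ge0 // lerD //.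
  by apply: ler_pM; rewrite ?sqrtr_ge0 ?ler_sqrt ?lerD2r ?addr_ge0.
Qed.

Theorem lemma2p2 (R : realType) :
  (forall lam : R, 0 < lam ->
     exists C : R, 0 < C /\
       forall eta t : R, 0 < eta -> 0 < t ->
         forall xi : R, g_fun lam eta t xi <= C * f_lam lam eta t)
  /\
  (forall lam eta : R, 0 < lam -> 0 < eta ->
     forall s t : R, 0 < s -> s <= t -> f_lam lam eta s <= f_lam lam eta t).
Proof.
split.
- move=> lam lam_gt0; exists (4 `^ lam + (2 * lam) `^ lam); split.
    by rewrite addr_gt0 ?powR_gt0 ?mulr_gt0.
  by move=> eta t eta_gt0 t_gt0 xi; apply: g_fun_le_f_lam.
- move=> lam eta lam_gt0 eta_gt0 s t s_gt0.
  by apply: f_lam_nondecreasing; apply: ltW.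
Qed.
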